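(* Let $C$ be an independent set of the Kneser graph of flags of type $\{2,3\}$ of $\mathrm{PG}(6,q)$ and let $\xi\in\mathbb{N}$ be such that every solid of $\mathrm{PG}(6,q)$ occurs in at most $\xi$ flags of $C$. Let $(E,S)\in C$. Then there are at most $$(q^2+q+1)\begin{bmatrix}5\\2\end{bmatrix}_q\xi=(q^8+2q^7+4q^6+5q^5+6q^4+5q^3+4q^2+2q+1)\xi$$ flags $(E',S')\in C$ with $E'\cap E=\emptyset$ and $S'\cap E\neq\emptyset$.
   Context: Dimensions are projective (planes 2, solids 3). A flag of type $\{2,3\}$ is a pair $(E,S)$ of a plane $E$ and a solid $S$ with $E\subseteq S$; in the Kneser graph distinct flags $(E,S),(E',S')$ are adjacent iff $E\cap S'=\emptyset$ and $E'\cap S=\emptyset$. $\begin{bmatrix}5\\2\end{bmatrix}_q=\frac{(q^5-1)(q^4-1)}{(q^2-1)(q-1)}$. *)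

(* PG(6,q) = projective geometry of the vector space F^7, F a finite field with q elements. *)
From mathcomp Require Import all_boot all_algebra all_field.
Set Implicit Arguments. Unset Strict Implicit. Unset Printing Implicit Defensive.
Import GRing.Theory.

Definition V7 (F : finFieldType) := 'rV[F]_7.

(* A flag of type {2,3}: (E,S) with E a projective plane (vector dim 3),
   S a projective solid (vector dim 4), E contained in S. *)
Definition flag (F : finFieldType) := ({vspace V7 F} * {vspace V7 F})%type.

Definition is_flag (F : finFieldType) (f : flag F) : bool :=
  [&& \dim f.1 == 3, \dim f.2 == 4 & (f.1 <= f.2)%VS].

(* Adjacency in the Kneser graph: distinct flags with E ∩ S' = ∅ and E' ∩ S = ∅
   (projectively empty = trivial vector intersection). *)
Definition kneser_adj (F : finFieldType) (f g : flag F) : bool :=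
  [&& f != g, (f.1 :&: g.2 == 0)%VS & (g.1 :&: f.2 == 0)%VS].

Definition kneser_independent (F : finFieldType) (C : seq (flag F)) : Prop :=
  [/\ uniq C, all (@is_flag F) C &
      forall f g, f \in C -> g \in C -> ~~ kneser_adj f g].

Definition gauss52 (q : nat) : nat :=
  ((q ^ 5 - 1) * (q ^ 4 - 1)) %/ ((q ^ 2 - 1) * (q - 1)).

From HB Require Import structures.
From mathcomp Require Import all_boot all_algebra all_field.
From mathcomp Require Import ring.

Set Implicit Arguments.
Unset Strict Implicit.
Unset Printing Implicit Defensive.

(* Fix a nonzero vector v of E. Non-adjacency forces the solids S', S'' of any two flags of C
   whose planes avoid E and whose solids contain v to meet outside <v>: a vector of E' :&: S''
   or of E'' :&: S' lies in E' or E'', which avoid E. Modulo v these solids are pairwise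
   intersecting planes of PG(5,q), each repeated at most xi times. An irreducible cubic over
   GF(q) identifies F^6 with GF(q^3)^2 and yields a spread of q^3 + 1 planes of PG(5,q), which
   contains at most one plane of the family. Averaging over all frames (ordered bases extending
   v), each solid through v lies in equally many of the resulting spreads, so at most
   [6 3]_q xi / (q^3 + 1) = [5 2]_q xi flags contain v. Finally, a flag whose solid meets E is
   counted for at least q - 1 of the q^3 - 1 nonzero vectors v of E. *)

Import GRing.Theory Num.Theory.
Local Open Scope ring_scope.

Lemma exists_irreducible_cubic (F : finFieldType) :
  exists2 p : {poly F}, irreducible_poly p & size p = 4%N.
Proof.
pose cubic (c : F * F * F) : {poly F} := Poly [:: c.1.1; c.1.2; c.2; 1].
have size_cubic c : size (cubic c) = 4%N by rewrite (PolyK (c := 1)) ?oner_eq0.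
suff [c rootless] : exists c, forall a, ~~ root (cubic c) a.
  by exists (cubic c) => //; apply: cubic_irreducible; rewrite ?size_cubic.
have [c /forallP rootless | has_root] := pickP [pred c | [forall a, ~~ root (cubic c) a]].
  by exists c.
have {}has_root c : {a | root (cubic c) a}.
  by have /negbT := has_root c; rewrite negb_forall => /existsP/sigW [a]; rewrite negbK; exists a.
(* If every monic cubic had a root, the factorisation map
   (a, b0, b1) |-> (X - a)(X^2 + b1 X + b0), on coefficient triples, would be onto,
   hence injective; but (X - 1) X^2 = X (X^2 - X). *)
pose mul (t : F * F * F) := let: (a, b0, b1) := t in (- (a * b0), b0 - a * b1, b1 - a).
pose cofactor (c : F * F * F) :=
  let a := sval (has_root c) in (a, c.1.2 + a * (c.2 + a), c.2 + a).
have cofactorK : cancel cofactor mul.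
  case=> [[c0 c1] c2]; rewrite /cofactor /=; case: (has_root _) => a /=.
  rewrite /root horner_Poly /= mul0r add0r => /eqP root_a.
  congr (_, _, _); last by rewrite addrK.
    by apply/eqP; rewrite -subr_eq0 -oppr_eq0 -root_a; apply/eqP; ring.
  by ring.
have /can_inj mul_inj : cancel mul cofactor := canF_sym cofactorK.
have : mul (0, 0, -1) = mul (1, 0, 0) by rewrite /mul /=; congr (_, _, _); ring.
by move/mul_inj => [/eqP]; rewrite eq_sym oner_eq0.
Qed.

Lemma irredp_dvdp_mul (F : fieldType) (p k r : {poly F}) :
  irreducible_poly p -> (size k < size p)%N -> (size r < size p)%N ->
  p %| k * r -> (k == 0) || (r == 0).
Proof.
move=> p_irr sk sr.
have coprime_small (s : {poly F}) : s != 0 -> (size s < size p)%N -> coprimep p s.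
  move=> s0 ss; rewrite irreducible_poly_coprime //.
  by apply: contraL ss => /(dvdp_leq s0); rewrite -leqNgt.
have [->|r0] := eqVneq r 0; first by rewrite orbT.
rewrite Gauss_dvdpl ?coprime_small // orbF; apply: contraLR => k0.
by rewrite -irreducible_poly_coprime ?coprime_small.
Qed.

Section Combinations.
Variables (F : fieldType) (vT : vectType F) (n : nat).
Implicit Types (a : n.-tuple vT) (k : {poly F}).

Definition comb a k : vT := \sum_(i < n) k`_i *: a`_i.

Fact comb_is_linear a : linear (comb a).
Proof.
move=> c k m; rewrite /comb scaler_sumr -big_split; apply: eq_bigr => i _.
by rewrite coefD coefZ scalerDl scalerA.
Qed.

HB.instance Definition _ (a : n.-tuple vT) :=
  GRing.isLinear.Build F {poly F} vT *:%R (comb a) (comb_is_linear a).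

Lemma comb_span a k : comb a k \in <<a>>%VS.
Proof. by apply: rpred_sum => i _; rewrite memvZ // memv_span ?mem_nth ?size_tuple. Qed.

Lemma span_combP a w : w \in <<a>>%VS -> exists2 k : {poly F}, (size k <= n)%N & w = comb a k.
Proof.
move=> /coord_span ->; exists (rVpoly (\row_i coord a i w)); first exact: size_poly.
by apply: eq_bigr => i _; rewrite coef_rVpoly_ord mxE.
Qed.

Lemma mem_span_consP u a w : w \in <<u :: a>>%VS ->
  exists c, exists2 k : {poly F}, (size k <= n)%N & w = c *: u + comb a k.
Proof.
by rewrite span_cons => /memv_addP[_ /vlineP[c ->] [_ /span_combP[k sk ->] ->]]; exists c, k.
Qed.

Lemma comb_inj a k k' : free a -> (size k <= n)%N -> (size k' <= n)%N ->
  comb a k = comb a k' -> k = k'.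
Proof.
move=> /freeP a_free sk sk' /eqP; rewrite -subr_eq0 -linearB => /eqP/a_free coef0.
apply/polyP => j; have [jn | nj] := ltnP j n.
  by apply/eqP; rewrite -subr_eq0 -coefB (coef0 (Ordinal jn)).
by rewrite !nth_default ?(leq_trans sk) ?(leq_trans sk').
Qed.

Lemma span_shift (a a' : n.-tuple vT) (b : seq vT) :
  (forall i : 'I_n, a'`_i - a`_i \in <<b>>%VS) -> (<<a' ++ b>> = <<a ++ b>>)%VS.
Proof.
suff sub (c c' : n.-tuple vT) : (forall i : 'I_n, c'`_i - c`_i \in <<b>>%VS) ->
    (<<c' ++ b>> <= <<c ++ b>>)%VS.
  move=> shift; apply/eqP; rewrite eqEsubv !sub // => i.
  by rewrite -opprB memvN.
move=> shift; apply/span_subvP => w; rewrite mem_cat span_cat.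
case/orP => [/(nthP 0)[i ic' <-] | wb]; last by rewrite -[w]add0r memv_add ?mem0v ?memv_span.
rewrite size_tuple in ic'; rewrite -[c'`_i](subrK c`_i) addrC.
by apply: memv_add; [rewrite memv_span ?mem_nth ?size_tuple | exact: (shift (Ordinal ic'))].
Qed.

End Combinations.

Section Frames.
Variables (F : fieldType) (vT : vectType F) (u : vT).
Implicit Types (t : 3.-tuple vT * 3.-tuple vT) (k m : {poly F}).

Definition frame t := free (u :: t.1 ++ t.2).

Lemma frame_coord_inj t c c' k k' m m' : frame t ->
    (size k <= 3)%N -> (size k' <= 3)%N -> (size m <= 3)%N -> (size m' <= 3)%N ->
    c *: u + comb t.1 k + comb t.2 m = c' *: u + comb t.1 k' + comb t.2 m' ->
  [/\ c = c', k = k' & m = m'].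
Proof.
rewrite /frame -cat1s !cat_free seq1_free => /and3P[u0 /and3P[free_a free_b]].
move=> /directv_add_unique dir_ab /directv_add_unique dir_u sk sk' sm sm' /eqP.
have comb_ab k1 m1 : comb t.1 k1 + comb t.2 m1 \in <<t.1 ++ t.2>>%VS.
  by rewrite span_cat memv_add ?comb_span.
rewrite -!addrA dir_u ?memvZ ?memv_span1 // xpair_eqE dir_ab ?comb_span //.
rewrite !xpair_eqE -subr_eq0 -scalerBl scaler_eq0 (negPf u0) orbF subr_eq0.
by case/and3P => /eqP-> /eqP/(comb_inj free_a sk sk')-> /eqP/(comb_inj free_b sm sm')->.
Qed.

Lemma frame_swap t : frame (t.2, t.1) = frame t.
Proof. by apply/perm_free; rewrite perm_cons perm_catC. Qed.

End Frames.

Section Spread.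
Variables (F : fieldType) (vT : vectType F) (p : {poly F}) (u : vT).
Hypotheses (p_irr : irreducible_poly p) (size_p : size p = 4%N).
Implicit Types (t : 3.-tuple vT * 3.-tuple vT) (k m x : {poly F}).

Definition shear x t : 3.-tuple vT * 3.-tuple vT :=
  ([tuple t.1`_i + comb t.2 (('X^i * x) %% p) | i < 3], t.2).

Definition spread_frame t (i : option {poly_3 F}) :=
  if i is Some x then shear x t else (t.2, t.1).

(* In the coordinates given by u and t = (a, b), with F^3 read as the field F[X]/(p),
   spread t (Some x) is <[u]> plus the graph of multiplication by x, and spread t None is
   <[u]> + <<b>>: modulo u, these subspaces pairwise meet trivially. *)
Definition spread t i : {vspace vT} := <<u :: (spread_frame t i).1>>%VS.

Lemma comb_shear x t k : (size k <= 3)%N ->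
  comb (shear x t).1 k = comb t.1 k + comb t.2 ((k * x) %% p).
Proof.
move=> sk; have -> : (k * x) %% p = \sum_(i < 3) k`_i *: (('X^i * x) %% p).
  rewrite -{1}(take_poly_id sk) /take_poly poly_def mulr_suml.
  rewrite (big_morph (fun r => r %% p) (modpD p) (@mod0p _ p)).
  by apply: eq_bigr => i _; rewrite -scalerAl modpZl.
rewrite linear_sum /comb -big_split; apply: eq_bigr => i _.
by rewrite nth_mktuple scalerDr linearZ.
Qed.

Lemma frame_shear x t : frame u (shear x t) = frame u t.
Proof.
rewrite /frame /free !span_cons (@span_shift _ _ _ t.1) => [|i].
  by rewrite /= !size_cat !size_tuple card_ord.
by rewrite /= nth_mktuple addrC addKr comb_span.
Qed.

Lemma frame_spread_frame t i : frame u (spread_frame t i) = frame u t.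
Proof. by case: i => [x|]; rewrite ?frame_shear ?frame_swap. Qed.

Lemma spread_frame_inj i : injective (spread_frame^~ i).
Proof.
case: i => [x|] [a b] [a' b'] /= eq_t; last by case: eq_t => -> ->.
have eq_b : b = b' by case: eq_t.
subst b'; congr (_, _); apply: eq_from_tnth => i.
by move/(congr1 (fun t => tnth t.1 i)): eq_t; rewrite !tnth_mktuple !(tnth_nth 0) => /addIr.
Qed.

Lemma mem_spread_shear t (x : {poly_3 F}) w : w \in spread t (Some x) ->
  exists c, exists2 k : {poly F},
    (size k <= 3)%N & w = c *: u + comb t.1 k + comb t.2 ((k * x) %% p).
Proof.
by move=> /mem_span_consP[c [k sk ->]]; exists c, k; rewrite // comb_shear // addrA.
Qed.

Lemma mem_spread_swap t w : w \in spread t None ->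
  exists c, exists2 m : {poly F}, (size m <= 3)%N & w = c *: u + comb t.1 0 + comb t.2 m.
Proof. by move=> /mem_span_consP[c [m sm ->]]; exists c, m; rewrite // linear0 addr0. Qed.

Lemma spread_meet t i j : frame u t -> i != j -> (spread t i :&: spread t j <= <[u]>)%VS.
Proof.
wlog [x ->] : i j / exists x : {poly_3 F}, i = Some x.
  move=> spread_meet_shear; case: i => [x|]; first by apply: spread_meet_shear; exists x.
  by case: j => [y|] // fr _; rewrite capvC spread_meet_shear //; exists y.
move=> fr xj; apply/subvP => w; rewrite memv_cap.
case/andP => /mem_spread_shear[c [k sk ->]] wj.
suff -> : k = 0 by rewrite linear0 mul0r mod0p linear0 !addr0 memvZ ?memv_line.
have small (r : {poly F}) : (size (r %% p)%R <= 3)%N by rewrite -ltnS -size_p ltn_modp irredp_neq0.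
case: j xj wj => [y|] xy; last first.
  have s0 : (size (0%R : {poly F}) <= 3)%N by rewrite size_poly0.
  by case/mem_spread_swap => c' [m sm eq_w]; case: (frame_coord_inj fr sk s0 (small _) sm eq_w).
move=> /mem_spread_shear[c' [k' sk' eq_w]].
have [_ <- /eqP] := frame_coord_inj fr sk sk' (small _) (small _) eq_w.
rewrite -subr_eq0 -modpN -modpD -mulrBr => /eqP/modp_eq0P dvd_p.
have small_k : (size k < size p)%N by rewrite size_p ltnS.
have small_xy : (size ((x : {poly F}) - y)%R < size p)%N.
  by rewrite size_p ltnS (leq_trans (size_polyD _ _)) // size_polyN geq_max !size_npoly.
case/orP: (irredp_dvdp_mul p_irr small_k small_xy dvd_p) => /eqP // /eqP.
by rewrite subr_eq0 => /eqP/val_inj xy_eq; rewrite xy_eq eqxx in xy.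
Qed.

End Spread.

Local Close Scope ring_scope.

Lemma sum_tuple_cons (T : finType) m (G : m.+1.-tuple T -> nat) :
  \sum_t G t = \sum_x \sum_(t : m.-tuple T) G [tuple of x :: t].
Proof.
rewrite pair_bigA (reindex (fun xt : T * m.-tuple T => [tuple of xt.1 :: xt.2])) //=.
exists (fun t => (thead t, behead_tuple t)) => [[x t] | t] _ /=.
  by congr (_, _); apply: val_inj.
by rewrite [RHS]tuple_eta.
Qed.

Lemma sum_indicator (T : finType) (A : pred T) : \sum_x (A x : nat) = #|A|.
Proof.
by rewrite -sum1_card [RHS]big_mkcond; apply: eq_bigr => x _; rewrite unfold_in; case: (A x).
Qed.

Lemma sum_count_mem (T : finType) (U : eqType) (A : pred T) (f : T -> U) (s : seq U) :
  \sum_(t | A t) count_mem (f t) s = \sum_(y <- s) #|[pred t | A t && (f t == y)]|.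
Proof.
elim: s => [|y s IHs]; first by rewrite big_nil big1.
rewrite big_cons -IHs big_split; congr (_ + _).
rewrite -sum_indicator big_mkcond; apply: eq_bigr => t _.
by rewrite /=; case: (A t); rewrite //= eq_sym.
Qed.

Section Counting.
Variables (F : finFieldType) (n : nat).
Local Notation vT := 'rV[F]_n.
Local Notation q := #|F|.

Lemma card_vspace_diff (U P : {vspace vT}) : (U <= P)%VS ->
  #|[pred w | (w \in P) && (w \notin U)]| = (q ^ \dim P - q ^ \dim U).
Proof.
move=> UP; rewrite -!card_vspace -(cardID (mem U) (mem P)).
have -> : #|[predI mem P & mem U]| = #|U|.
  by apply: eq_card => w; rewrite !inE andb_idl // => /(subvP UP).
by rewrite addKn; apply: eq_card => w; rewrite !inE andbC.
Qed.

Lemma card_extensions (P : {vspace vT}) m (X : seq vT) : free X -> (<<X>> <= P)%VS ->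
  #|[pred t : m.-tuple vT | free (X ++ t) && (<<t>> <= P)%VS]| =
  (\prod_(i < m) (q ^ \dim P - q ^ (size X + i))).
Proof.
elim: m X => [|m IHm] X free_X XP.
  rewrite big_ord0 -[RHS](card_tuple 0 vT); apply: eq_card => t.
  by rewrite tuple0 !inE /= cats0 span_nil sub0v free_X.
have free_rcons x : free (rcons X x) = (x \notin <<X>>%VS) && free X.
  by rewrite -free_cons; apply: perm_free; rewrite perm_rcons.
have step x : (\sum_(t : m.-tuple vT) (free (X ++ x :: t) && (<<x :: t>> <= P)%VS) =
    ((x \in P) && (x \notin <<X>>%VS)) * \prod_(i < m) (q ^ \dim P - q ^ (size X + i.+1))).
  have [xP | xP] := boolP (x \in P); last first.
    by rewrite big1 // => t _; rewrite span_cons subv_add -memvE (negPf xP) andbF.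
  have [xX | xX] := boolP (x \in <<X>>%VS).
    rewrite big1 // => t _; apply/eqP; rewrite eqb0; apply: contraL xX.
    rewrite -cat_rcons => /andP[/catl_free].
    by rewrite free_rcons => /andP[].
  have free_xX : free (rcons X x) by rewrite free_rcons xX.
  have xXP : (<<rcons X x>> <= P)%VS.
    by rewrite (eq_span (mem_rcons X x)) span_cons subv_add -memvE xP.
  rewrite [X in _ = X]mul1n.
  have -> : \prod_(i < m) (q ^ \dim P - q ^ (size X + i.+1)) =
            \prod_(i < m) (q ^ \dim P - q ^ (size (rcons X x) + i)).
    by apply: eq_bigr => i _; rewrite size_rcons addSnnS.
  rewrite -IHm // -sum_indicator; apply: eq_bigr => t _.
  by rewrite -cat_rcons span_cons subv_add -memvE xP.
rewrite -sum_indicator sum_tuple_cons (eq_bigr _ (fun x _ => step x)) -big_distrl /=.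
by rewrite sum_indicator card_vspace_diff // big_ord_recl addn0 (eqP free_X).
Qed.

Lemma dimv_full : \dim (fullv : {vspace vT}) = n.
Proof. by rewrite dimvf /dim /= mul1n. Qed.

Lemma card_frames_in (u : vT) (P : {vspace vT}) : u != 0%R -> u \in P ->
  #|[pred t : 3.-tuple vT * 3.-tuple vT | frame u t && (<<t.1>> <= P)%VS]| =
  (\prod_(i < 3) (q ^ \dim P - q ^ (1 + i))) * \prod_(i < 3) (q ^ n - q ^ (4 + i)).
Proof.
move=> u0 uP; set K := \prod_(i < 3) (q ^ n - q ^ (4 + i)).
have completions (a : 3.-tuple vT) :
    \sum_(b : 3.-tuple vT) (free ((u :: a) ++ b) : nat) = free (u :: a) * K.
  have [free_ua | not_free] := boolP (free (u :: a)); last first.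
    by rewrite big1 // => b _; apply/eqP; rewrite eqb0; apply: contra not_free => /catl_free.
  transitivity #|[pred b : 3.-tuple vT | free ((u :: a) ++ b) && (<<b>> <= fullv)%VS]|.
    by rewrite -sum_indicator; apply: eq_bigr => b _; rewrite /= subvf andbT.
  by rewrite card_extensions ?subvf // dimv_full /= size_tuple mul1n.
have free_u : free [:: u] by rewrite seq1_free.
have uP' : (<<[:: u]>> <= P)%VS by rewrite span_seq1 -memvE.
rewrite -[X in X * _](card_extensions 3 free_u uP') -!sum_indicator big_distrl /=.
transitivity (\sum_a \sum_b (frame u (a, b) && (<<a>> <= P)%VS : nat)).
  by rewrite pair_bigA; apply: eq_bigr => -[a b].
apply: eq_bigr => a _; have [aP | aP] := boolP (<<a>> <= P)%VS; last first.
  by rewrite andbF big1 // => b _; rewrite andbF.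
by rewrite andbT -completions; apply: eq_bigr => b _; rewrite andbT.
Qed.

Lemma frame_span_eq (u : vT) t (P : {vspace vT}) : frame u t -> u \in P -> \dim P = 4 ->
  (<<u :: t.1>> == P)%VS = (<<t.1>> <= P)%VS.
Proof.
move=> fr uP dimP; have /eqP dim_ua : free (u :: t.1).
  by move: fr; rewrite /frame -cat_cons => /catl_free.
by rewrite eqEdim dim_ua /= size_tuple dimP leqnn andbT span_cons subv_add -memvE uP.
Qed.

Lemma card_spread (p : {poly F}) (u : vT) (P : {vspace vT}) i :
  #|[pred t | frame u t && (spread p u t i == P)]| =
  #|[pred t : 3.-tuple vT * 3.-tuple vT | frame u t && (<<u :: t.1>> == P)%VS]|.
Proof.
pose solid_frame := [pred t : 3.-tuple vT * 3.-tuple vT | frame u t && (<<u :: t.1>> == P)%VS].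
transitivity #|[preim spread_frame p ^~ i of solid_frame]|.
  by apply: eq_card => t; rewrite !inE /= frame_spread_frame.
rewrite card_preim; last exact: spread_frame_inj.
by apply: eq_card => t; rewrite inE (injF_onto (@spread_frame_inj _ vT p i)).
Qed.

Lemma card_vspace_nonzero (U : {vspace vT}) :
  #|[pred v | (v \in U) && (v != 0%R)]| = q ^ \dim U - 1.
Proof.
transitivity #|[pred v | (v \in U) && (v \notin (0 : {vspace vT})%VS)]|.
  by apply: eq_card => v; rewrite !inE memv0.
by rewrite card_vspace_diff ?sub0v // dimv0.
Qed.

Lemma count_meet_le (E : {vspace vT}) (Ss : seq {vspace vT}) :
  (q - 1) * count (fun S : {vspace vT} => (S :&: E != 0)%VS) Ss <=
  \sum_(v | (v \in E) && (v != 0%R)) count (fun S : {vspace vT} => v \in S) Ss.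
Proof.
elim: Ss => [|S Ss IHs] /=; first by rewrite muln0.
rewrite mulnDr big_split leq_add //.
have [_ | SE] := eqVneq (S :&: E)%VS 0%VS; first by rewrite muln0.
rewrite muln1 (_ : \sum_(v | _) _ = q ^ \dim (S :&: E) - 1).
  have q_gt0 : 0 < q by apply/card_gt0P; exists 0%R.
  by rewrite leq_sub2r // -{1}(expn1 q) leq_pexp2l // lt0n dimv_eq0.
rewrite -card_vspace_nonzero -sum_indicator [LHS]big_mkcond; apply: eq_bigr => v _.
by rewrite /= memv_cap; case: (v \in S); case: (v \in E); case: (_ != _).
Qed.

End Counting.

Lemma gauss52E q : 1 < q ->
  gauss52 q = q ^ 6 + q ^ 5 + 2 * q ^ 4 + 2 * q ^ 3 + 2 * q ^ 2 + q + 1.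
Proof.
move=> q1; have q0 : 0 < q := ltnW q1.
have den_gt0 : 0 < (q ^ 2 - 1) * (q - 1).
  by rewrite muln_gt0 !subn_gt0 q1 (leq_trans q1) // -{1}(expn1 q) leq_pexp2l.
rewrite /gauss52 (_ : _ * _ = (q ^ 6 + q ^ 5 + 2 * q ^ 4 + 2 * q ^ 3 + 2 * q ^ 2 + q + 1) *
                            ((q ^ 2 - 1) * (q - 1))) ?mulnK //.
apply/eqP; rewrite -(eqr_nat int) !natrM !natrB ?expn_gt0 ?q0 //.
by rewrite !natrD !natrM; apply/eqP; ring.
Qed.

Lemma prod_frames_ratio q : 1 < q ->
  \prod_(i < 3) (q ^ 7 - q ^ (1 + i)) =
  (q ^ 3 + 1) * gauss52 q * \prod_(i < 3) (q ^ 4 - q ^ (1 + i)).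
Proof.
move=> q1; rewrite gauss52E // !big_ord_recr !big_ord0 /= !addn0.
apply/eqP; rewrite -(eqr_nat int) !natrM !natrB ?leq_pexp2l ?(ltnW q1) //.
by rewrite !natrD !natrM; apply/eqP; ring.
Qed.

Lemma cube_sub1 q : 0 < q -> q ^ 3 - 1 = (q - 1) * (q ^ 2 + q + 1).
Proof.
move=> q0; apply/eqP; rewrite -(eqr_nat int) natrM !natrB ?expn_gt0 ?q0 //.
by rewrite !natrD !natrM; apply/eqP; ring.
Qed.

Section SolidsThroughPoint.
Variables (F : finFieldType) (u : V7 F) (Ss : seq {vspace V7 F}) (xi : nat).
Local Notation q := #|F|.
Hypotheses (u_neq0 : u != 0%R) (Ss_dim : {in Ss, forall S, \dim S = 4})
  (Ss_u : {in Ss, forall S : {vspace V7 F}, u \in S})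
  (Ss_meet : {in Ss &, forall S S', ~~ (S :&: S' <= <[u]>)%VS})
  (Ss_mult : {in Ss, forall S, count_mem S Ss <= xi}).

Lemma card_solid_frames S : S \in Ss ->
  #|[pred t | frame u t && (<<u :: t.1>> == S)%VS]| =
  \prod_(i < 3) (q ^ 4 - q ^ (1 + i)) * \prod_(i < 3) (q ^ 7 - q ^ (4 + i)).
Proof.
move=> SSs; transitivity #|[pred t | frame u t && (<<t.1>> <= S)%VS]|.
  apply: eq_card => t; rewrite !inE.
  by case fr: (frame u t); rewrite // frame_span_eq ?Ss_u ?Ss_dim.
by rewrite card_frames_in ?Ss_u ?Ss_dim.
Qed.

Section Spreads.
Variable p : {poly F}.
Hypotheses (p_irr : irreducible_poly p) (size_p : size p = 4).

Lemma spread_hits_le t : frame u t ->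
  \sum_(i : option {poly_3 F}) count_mem (spread p u t i) Ss <= xi.
Proof.
move=> fr; have [i0 hit0 | miss] := pickP (fun i => spread p u t i \in Ss); last first.
  by rewrite big1 // => i _; apply/count_memPn; rewrite miss.
rewrite (bigD1 i0) //= big1 ?addn0 ?Ss_mult // => i i_neq0; apply/count_memPn/negP => hit.
by have := Ss_meet hit0 hit; rewrite (spread_meet p_irr size_p fr) // eq_sym.
Qed.

Lemma sum_spread_hits :
  \sum_(t | frame u t) \sum_(i : option {poly_3 F}) count_mem (spread p u t i) Ss =
  size Ss * ((q ^ 3 + 1) * (\prod_(i < 3) (q ^ 4 - q ^ (1 + i)) *
                            \prod_(i < 3) (q ^ 7 - q ^ (4 + i)))).
Proof.
set K := _ * \prod_(i < 3) _.
have hits_of_spread i : \sum_(t | frame u t) count_mem (spread p u t i) Ss = size Ss * K.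
  rewrite sum_count_mem big_seq (eq_bigr (fun=> K)) => [|S SSs].
    by rewrite -big_seq big_const_seq count_predT iter_addn_0 mulnC.
  by rewrite card_spread card_solid_frames.
rewrite exchange_big /= (eq_bigr _ (fun i _ => hits_of_spread i)) sum_nat_const.
by rewrite card_option card_npoly addn1 mulnCA.
Qed.

End Spreads.

Lemma size_solids_through_point_le : size Ss <= gauss52 q * xi.
Proof.
have [p p_irr size_p] := exists_irreducible_cubic F.
have q_gt1 : 1 < q := finNzRing_gt1 F.
have frames_gt0 : 0 < (q ^ 3 + 1) * (\prod_(i < 3) (q ^ 4 - q ^ (1 + i)) *
                                     \prod_(i < 3) (q ^ 7 - q ^ (4 + i))).
  by rewrite !big_ord_recr !big_ord0 /= !muln_gt0 !subn_gt0 !ltn_exp2l ?addn1.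
rewrite -(leq_pmul2r frames_gt0) -(sum_spread_hits p).
apply: leq_trans (@leq_sum _ _ _ _ _ (spread_hits_le p_irr size_p)) _.
rewrite (eq_bigl (mem [pred t | frame u t])) // sum_nat_const.
have -> : #|[pred t | frame u t]| =
          \prod_(i < 3) (q ^ 7 - q ^ (1 + i)) * \prod_(i < 3) (q ^ 7 - q ^ (4 + i)).
  transitivity #|[pred t | frame u t && (<<t.1>> <= fullv)%VS]|.
    by apply: eq_card => t; rewrite !inE subvf andbT.
  by rewrite card_frames_in ?memvf // dimv_full.
by rewrite prod_frames_ratio //; apply: eq_leq; ring.
Qed.

End SolidsThroughPoint.

Lemma capv_nsub_line (F : fieldType) (vT : vectType F) (E E1 S1 S2 : {vspace vT}) (u : vT) :
  u \in E -> (E1 <= S1)%VS -> (E1 :&: E == 0)%VS -> (E1 :&: S2 != 0)%VS ->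
  ~~ (S1 :&: S2 <= <[u]>)%VS.
Proof.
move=> uE E1S1 /eqP E1E; apply: contra => S12u; rewrite -subv0 -E1E subv_cap capvSl /=.
by apply: subv_trans (capvS E1S1 (subvv S2)) (subv_trans S12u _); rewrite -memvE.
Qed.

Lemma independent_solids_meet (F : finFieldType) (C : seq (flag F)) (E : {vspace V7 F}) u f g :
  kneser_independent C -> u \in E -> f \in C -> g \in C ->
  (f.1 :&: E == 0)%VS -> (g.1 :&: E == 0)%VS -> ~~ (f.2 :&: g.2 <= <[u]>)%VS.
Proof.
case=> _ /allP flagC nonadj uE fC gC fE gE.
have /and3P[_ /eqP dim_f f12] := flagC f fC; have /and3P[_ _ g12] := flagC g gC.
have [<- | fg] := eqVneq f g.
  by rewrite capvv; apply/negP => /dimvS; rewrite dim_f dim_vline; case: (u != 0%R).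
move: (nonadj f g fC gC); rewrite /kneser_adj fg /= negb_and => /orP[fg2 | gf2].
  exact: capv_nsub_line uE f12 fE fg2.
by rewrite capvC; apply: capv_nsub_line uE g12 gE gf2.
Qed.

Lemma count_avoiding_through_point_le (F : finFieldType) (C : seq (flag F)) xi
    (E : {vspace V7 F}) (v : V7 F) :
  kneser_independent C ->
  (forall S : {vspace V7 F}, \dim S = 4 -> count (fun f : flag F => f.2 == S) C <= xi) ->
  v \in E -> v != 0%R ->
  count (fun f : flag F => (f.1 :&: E == 0)%VS && (v \in f.2)) C <= gauss52 #|F| * xi.
Proof.
move=> indep hxi vE v_neq0; have [_ /allP flagC _] := indep.
pose Sv := [seq f.2 | f : flag F <- C & (f.1 :&: E == 0)%VS && (v \in f.2)].
rewrite -size_filter -(size_map (fun f : flag F => f.2)) -/Sv.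
have memSv S : S \in Sv -> exists2 f, f \in C & [/\ (f.1 :&: E == 0)%VS, v \in f.2 & S = f.2].
  by case/mapP => f; rewrite mem_filter => /andP[/andP[fE vf] fC] ->; exists f.
apply: size_solids_through_point_le v_neq0 _ _ _ _.
- by move=> _ /memSv[f fC [_ _ ->]]; have /and3P[_ /eqP] := flagC f fC.
- by move=> _ /memSv[f _ [_ vf ->]].
- move=> _ _ /memSv[f fC [fE _ ->]] /memSv[g gC [gE _ ->]].
  exact: independent_solids_meet indep vE fC gC fE gE.
- move=> _ /memSv[f fC [_ _ ->]]; have /and3P[_ /eqP dim_f _] := flagC f fC.
  apply: leq_trans (hxi _ dim_f); rewrite count_map count_filter.
  by apply: sub_count => g /andP[].
Qed.

Theorem lemma3p3 (F : finFieldType) (C : seq (flag F)) (xi : nat) :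
  kneser_independent C ->
  (forall S : {vspace V7 F}, \dim S = 4 -> count (fun f : flag F => f.2 == S) C <= xi) ->
  forall E S : {vspace V7 F}, (E, S) \in C ->
  count (fun f : flag F => (f.1 :&: E == 0)%VS && (f.2 :&: E != 0)%VS) C
    <= (#|F| ^ 2 + #|F| + 1) * gauss52 #|F| * xi.
Proof.
move=> indep hxi E S ESC.
have /and3P[/eqP /= dimE _ _] : is_flag (E, S) by case: indep => _ /allP flags _; apply: flags.
have q_gt1 : 1 < #|F| := finNzRing_gt1 F.
pose Ss := [seq f.2 | f : flag F <- C & (f.1 :&: E == 0)%VS].
have -> : count (fun f : flag F => (f.1 :&: E == 0)%VS && (f.2 :&: E != 0)%VS) C =
          count (fun S => (S :&: E != 0)%VS) Ss.
  by rewrite count_map count_filter; apply: eq_count => f; rewrite /= andbC.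
rewrite -(@leq_pmul2l (#|F| - 1)) ?subn_gt0 //; apply: leq_trans (count_meet_le E Ss) _.
apply: leq_trans (@leq_sum _ _ _ _ (fun=> gauss52 #|F| * xi) _) _ => [v /andP[vE v_neq0] |].
  rewrite count_map count_filter.
  apply: leq_trans (count_avoiding_through_point_le indep hxi vE v_neq0).
  by apply/eq_leq/eq_count => f; rewrite /= andbC.
rewrite (eq_bigl (mem [pred v | (v \in E) && (v != 0%R)])) // sum_nat_const.
by rewrite card_vspace_nonzero dimE cube_sub1 ?(ltnW q_gt1) // !mulnA.
Qed.
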